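(* Let $G=(\mathcal V,\mathcal H,\nu,\iota;\mathcal S,\mu,\sigma_1,\sigma_2)$ be a 2-graph. Define the set of cells $\mathcal C_G:=\mathcal V\cup(\mathcal E\cup\mathcal E^{\mathrm{ext}})\cup\mathcal F$ with dimension $0$ for vertices, $1$ for (internal or external) edges and $2$ for faces, and the relation $<$ given by: for $v\in\mathcal V$, $e\in\mathcal E\cup\mathcal E^{\mathrm{ext}}$, $f\in\mathcal F$, $v<e$ iff there is $h\in e$ with $\nu(h)=v$; $e<f$ iff there are $h\in e$ and $s$ occurring in $f$ with $\mu(s)=h$; $v<f$ iff there is an $e$ with $v<e<f$. Then $\mathcal C_G$ is a pure complex in the sense of Reidemeister. If moreover $\nu^{-1}(v)\neq\emptyset$ for every $v\in\mathcal V$ and $\mu^{-1}(h)\neq\emptyset$ for every $h\in\mathcal H$, then $\mathcal C_G$ is a 2-dimensional complex.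
   Context: A 2-graph is a tuple $(\mathcal V,\mathcal H,\nu,\iota;\mathcal S,\mu,\sigma_1,\sigma_2)$ of finite sets $\mathcal V$ (vertices), $\mathcal H$ (half-edges), $\mathcal S$ (strand sections), maps $\nu:\mathcal H\to\mathcal V$, $\mu:\mathcal S\to\mathcal H$, an involution $\iota$ of $\mathcal H$, a fixed-point free involution $\sigma_1$ of $\mathcal S$ with $\nu\circ\mu\circ\sigma_1=\nu\circ\mu$, and an involution $\sigma_2$ of $\mathcal S$ with $\iota\circ\mu=\mu\circ\sigma_2$ such that $s$ is fixed by $\sigma_2$ iff $\mu(s)$ is fixed by $\iota$. The (internal) edges $\mathcal E$ are the two-element orbits $\{h,\iota(h)\}$; the external half-edges are the fixed points of $\iota$, and the external edges are $\mathcal E^{\mathrm{ext}}=\{\{h\}: \iota(h)=h\}$. Faces: a tuple $(s_1,\dots,s_{2n})$ of distinct strand sections with $s_{2i}=\sigma_1(s_{2i-1})$ and $s_{2i+1}=\sigma_2(s_{2i})$ is an external face if $s_1$ and $s_{2n}$ are fixed points of $\sigma_2$; if instead $\sigma_2(s_{2n})=s_1$, its equivalence class under cyclic shifts $s_i\mapsto s_{i+2}$ is an internal face; $\mathcal F$ is the set of all external and internal faces (''$s$ occurs in $f$'' is independent of the representative). A complex in the sense of Reidemeister is a set $\mathcal C$ of cells with a dimension map $\dim:\mathcal C\to\mathbb N$ and a partial order $\le$ such that whenever $c>c''$ and $\dim c-\dim c''>1$ there is $c'$ with $c>c'>c''$. It is pure if every cell of nonzero dimension is $>$ some 0-cell.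 It is $n$-dimensional if $n$ is the maximal dimension of its cells and every cell is $\le$ some $n$-cell. *)

From mathcomp Require Import all_boot.
Set Implicit Arguments. Unset Strict Implicit. Unset Printing Implicit Defensive.

Record two_graph := TwoGraph {
  V : finType;
  H : finType;
  S : finType;
  nu : H -> V;
  iota : H -> H;
  mu : S -> H;
  sigma1 : S -> S;
  sigma2 : S -> S;
  iota_invol : forall h, iota (iota h) = h;
  sigma1_invol : forall s, sigma1 (sigma1 s) = s;
  sigma1_fpf : forall s, sigma1 s <> s;
  nu_mu_sigma1 : forall s, nu (mu (sigma1 s)) = nu (mu s);
  sigma2_invol : forall s, sigma2 (sigma2 s) = s;
  iota_mu : forall s, iota (mu s) = mu (sigma2 s);
  sigma2_fix : forall s, sigma2 s = s <-> iota (mu s) = mu s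
}.

Section Cells.
Variable G : two_graph.

Definition is_int_edge (e : {set H G}) : Prop :=
  exists h, iota h <> h /\ e = [set h; iota h].
Definition is_ext_edge (e : {set H G}) : Prop :=
  exists h, iota h = h /\ e = [set h].
Definition edge := {e : {set H G} | is_int_edge e \/ is_ext_edge e}.

(* Face tuples (s_1, ..., s_{2n}), 0-indexed as t`_0 ... t`_(2n-1). *)
Definition face_tuple_shape (t : seq (S G)) : Prop :=
  [/\ 0 < size t, ~~ odd (size t), uniq t,
      (forall i, i.*2.+1 < size t ->
         onth t i.*2.+1 = omap (@sigma1 G) (onth t i.*2)) &
      (forall i, i.*2.+2 < size t ->
         onth t i.*2.+2 = omap (@sigma2 G) (onth t i.*2.+1))].

Definition is_ext_face (t : seq (S G)) : Prop :=
  [/\ face_tuple_shape t,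
      omap (@sigma2 G) (onth t 0) = onth t 0 &
      omap (@sigma2 G) (onth t (size t).-1) = onth t (size t).-1].

Definition is_int_face (t : seq (S G)) : Prop :=
  face_tuple_shape t /\ omap (@sigma2 G) (onth t (size t).-1) = onth t 0.

Definition face_class (t : seq (S G)) : seq (S G) -> Prop :=
  fun t' => t' = t \/ (is_int_face t /\ exists k, t' = rot k.*2 t).

Definition face :=
  {P : seq (S G) -> Prop | exists t, (is_ext_face t \/ is_int_face t) /\ P = face_class t}.

Definition occurs (s : S G) (f : face) : Prop :=
  exists t, proj1_sig f t /\ s \in t.

Inductive cell : Type :=
| CV of V G
| CE of edge
| CF of face.

Definition cell_dim (c : cell) : nat :=
  match c with CV _ => 0 | CE _ => 1 | CF _ => 2 end.

Definition v_lt_e (v : V G) (e : edge) : Prop :=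
  exists h, h \in proj1_sig e /\ nu h = v.
Definition e_lt_f (e : edge) (f : face) : Prop :=
  exists h s, [/\ h \in proj1_sig e, occurs s f & mu s = h].

Definition cell_lt (c c' : cell) : Prop :=
  match c, c' with
  | CV v, CE e => v_lt_e v e
  | CE e, CF f => e_lt_f e f
  | CV v, CF f => exists e, v_lt_e v e /\ e_lt_f e f
  | _, _ => False
  end.

Definition cell_le (c c' : cell) : Prop := c = c' \/ cell_lt c c'.

End Cells.

Section Complex.
Variables (C : Type) (dim : C -> nat) (le : C -> C -> Prop).

Definition strict (c c' : C) : Prop := le c c' /\ c <> c'.

Definition reidemeister_complex : Prop :=
  [/\ (forall c, le c c),
      (forall c c', le c c' -> le c' c -> c = c'),
      (forall c1 c2 c3, le c1 c2 -> le c2 c3 -> le c1 c3) &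
      (forall c c'', strict c'' c -> 1 < dim c - dim c'' ->
         exists c', strict c' c /\ strict c'' c')].

Definition pure_complex : Prop :=
  reidemeister_complex /\
  (forall c, dim c <> 0 -> exists c0, dim c0 = 0 /\ strict c0 c).

Definition n_dimensional_complex (n : nat) : Prop :=
  [/\ reidemeister_complex,
      (forall c, dim c <= n) &
      (forall c, exists c', dim c' = n /\ le c c')].
End Complex.

From Pilot Require Import Defs.
From mathcomp Require Import all_boot.
Set Implicit Arguments. Unset Strict Implicit. Unset Printing Implicit Defensive.

(* The substance is that every strand section s occurs in a face.  With
   sigma21 = sigma2 \o sigma1, the candidate face tuples are the chains
   y, sigma1 y, sigma21 y, sigma1 (sigma21 y), ...  Take a longest chain through s
   with distinct entries.  Since it extends neither forwards nor backwards, sigma2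
   maps both of its end points into it; as sigma2 already pairs up the interior
   entries, it either sends the last entry to the first (an internal face) or
   fixes both end points (an external face).  The Reidemeister axioms themselves
   are immediate, v < f being defined through an intermediate edge. *)

Section StrandChains.
Variable G : two_graph.
Local Notation s1 := (@sigma1 G).
Local Notation s2 := (@sigma2 G).

Lemma sigma1K : involutive s1. Proof. exact: sigma1_invol. Qed.
Lemma sigma2K : involutive s2. Proof. exact: sigma2_invol. Qed.

Lemma sigma1_eqF (x : S G) : (s1 x == x) = false.
Proof. by apply/eqP; exact: sigma1_fpf. Qed.

Definition sigma21 (x : S G) := s2 (s1 x).

Lemma sigma21_sigma1 x : sigma21 (s1 (sigma21 x)) = s1 x.
Proof. by rewrite /sigma21 sigma1K sigma2K. Qed.

Fixpoint chain (y : S G) (m : nat) : seq (S G) :=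
  if m is m'.+1 then y :: s1 y :: chain (sigma21 y) m' else [::].

Lemma chainS y m : chain y m.+1 = y :: s1 y :: chain (sigma21 y) m.
Proof. by []. Qed.

Lemma size_chain y m : size (chain y m) = m.*2.
Proof. by elim: m y => //= m IH y; rewrite IH. Qed.

Lemma chainSr y m :
  chain y m.+1 = chain y m ++ [:: iter m sigma21 y; s1 (iter m sigma21 y)].
Proof. by elim: m y => //= m IH y; rewrite IH -iterSr. Qed.

Lemma rev_chain y m : rev (chain y m.+1) = chain (s1 (iter m sigma21 y)) m.+1.
Proof.
elim: m => [|m IH]; first by rewrite /= sigma1K.
by rewrite chainSr rev_cat IH /= sigma21_sigma1 !sigma1K.
Qed.

Lemma mem_chain_sigma1 y m x : (s1 x \in chain y m) = (x \in chain y m).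
Proof.
elim: m y => //= m IH y.
by rewrite !inE IH (inv_eq sigma1K) (inj_eq (can_inj sigma1K)) orbCA.
Qed.

Lemma mem_chain_last y m : s1 (iter m sigma21 y) \in chain y m.+1.
Proof. by rewrite chainSr mem_cat !inE eqxx !orbT. Qed.

Lemma uniq_chainSr y m :
  uniq (chain y m.+1) = uniq (chain y m) && (iter m sigma21 y \notin chain y m).
Proof.
rewrite chainSr cat_uniq /= !inE mem_chain_sigma1 orbF orbb eq_sym sigma1_eqF.
by rewrite !andbT.
Qed.

Lemma chainSl y m : chain (s1 (s2 y)) m.+1 = s1 (s2 y) :: s2 y :: chain y m.
Proof. by rewrite /= /sigma21 sigma1K sigma2K. Qed.

Lemma uniq_chainSl y m :
  uniq (chain (s1 (s2 y)) m.+1) = uniq (chain y m) && (s2 y \notin chain y m).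
Proof.
rewrite chainSl /= inE mem_chain_sigma1 sigma1_eqF /=.
by rewrite andbA andbb andbC.
Qed.

Lemma chain_last_neq_head y m : uniq (chain y m.+1) -> s1 (iter m sigma21 y) != y.
Proof.
case: m => [|m]; first by rewrite sigma1_eqF.
rewrite uniq_chainSr => /andP[_]; apply: contraNneq => e.
by rewrite -mem_chain_sigma1 e /= inE eqxx.
Qed.

Lemma sigma2_chain_last y m (z := s1 (iter m sigma21 y)) :
  uniq (chain y m.+1) -> s2 z \in chain y m.+1 -> s2 z = z \/ s2 z = y.
Proof.
rewrite {}/z; elim: m y => [|m IH] y.
  by rewrite /= !inE => _ /orP[] /eqP; [right | left].
rewrite chainS iterSr; set C := chain _ m.+1; set z := s1 (iter m _ _).
move=> /andP[_ /andP[s1yC uC]] /predU1P[-> | /predU1P[e | zC]].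
- by right.
- have := chain_last_neq_head uC.
  by rewrite -/z /sigma21 -e sigma2K eqxx.
- have [|e] := IH _ uC zC; first by left.
  move: s1yC; by rewrite -[s1 y]sigma2K -/(sigma21 y) -e sigma2K mem_chain_last.
Qed.

Lemma sigma2_chain_head y m (z := s1 (iter m sigma21 y)) :
  uniq (chain y m.+1) -> s2 y \in chain y m.+1 -> s2 y = y \/ s2 y = z.
Proof.
have revC : rev (chain y m.+1) = chain z m.+1 := rev_chain y m.
have yE : y = s1 (iter m sigma21 z).
  by have := rev_chain z m; rewrite -revC revK => -[].
rewrite -[chain y _]revK revC rev_uniq mem_rev yE.
exact: sigma2_chain_last.
Qed.

Lemma onth_chain_odd y m i :
  onth (chain y m) i.*2.+1 = omap s1 (onth (chain y m) i.*2).
Proof. by elim: m y i => [|m IH] y [|i] //; rewrite doubleS; exact: IH. Qed.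

Lemma onth_chain_even y m i : i.*2.+2 < m.*2 ->
  onth (chain y m) i.*2.+2 = omap s2 (onth (chain y m) i.*2.+1).
Proof.
elim: m y i => [|m IH] y [|i] //; first by case: m {IH}.
by rewrite !doubleS !ltnS => /IH /= ->.
Qed.

Lemma onth_chain_last y m :
  onth (chain y m.+1) (size (chain y m.+1)).-1 = Some (s1 (iter m sigma21 y)).
Proof.
rewrite size_chain chainSr onth_cat size_chain doubleS ltnNge leqnSn /=.
by rewrite subSn // subnn.
Qed.

Lemma chain_face_tuple_shape y m :
  uniq (chain y m.+1) -> face_tuple_shape (chain y m.+1).
Proof.
move=> uC; split=> //; rewrite ?size_chain ?odd_double //.
- by move=> i _; exact: onth_chain_odd.
- by move=> i; exact: onth_chain_even.
Qed.

Lemma maximal_chain s : exists y m, [/\ uniq (chain y m.+1), s \in chain y m.+1,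
  s2 (s1 (iter m sigma21 y)) \in chain y m.+1 & s2 y \in chain y m.+1].
Proof.
pose P m := [exists y, uniq (chain y m) && (s \in chain y m)].
have P1 : P 1.
  by apply/existsP; exists s; rewrite /= !inE eqxx eq_sym sigma1_eqF.
have Pbound m : P m -> m <= #|S G|.
  case/existsP=> y /andP[/card_uniqP uC _].
  by rewrite (leq_trans (leq_addl m m)) // addnn -(size_chain y) -uC max_card.
case: (ex_maxnP (ex_intro _ 1 P1) Pbound) => -[|m] /existsP[y /andP[uC sC]] maxm.
  by rewrite in_nil in sC.
have maxSm y' : s \in chain y' m.+2 -> ~~ uniq (chain y' m.+2).
  move=> sC'; apply/negP => uC'.
  have /maxm : P m.+2 by apply/existsP; exists y'; rewrite uC'.
  by rewrite ltnn.
exists y, m; split=> //.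
- have := maxSm y; rewrite uniq_chainSr uC (chainSr y m.+1) mem_cat sC negbK.
  by apply.
- have := maxSm (s1 (s2 y)).
  rewrite uniq_chainSl uC (chainSl y m.+1) in_cons (in_cons (s2 y)) sC !orbT negbK.
  by apply.
Qed.

Lemma face_cover s : exists f : face G, occurs s f.
Proof.
have [y [m [uC sC lastC headC]]] := maximal_chain s.
have shape := chain_face_tuple_shape uC.
have lastE := onth_chain_last y m.
have int_face : s2 (s1 (iter m sigma21 y)) = y -> is_int_face (chain y m.+1).
  by move=> e; split; rewrite // lastE /= e.
have face_t : is_ext_face (chain y m.+1) \/ is_int_face (chain y m.+1).
  have [ez|] := sigma2_chain_last uC lastC; last by right; exact: int_face.
  have [ey|ey] := sigma2_chain_head uC headC.
    by left; split=> //; rewrite ?lastE /= ?ey ?ez.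
  by right; apply: int_face; rewrite -ey sigma2K.
exists (exist _ (face_class (chain y m.+1)) (ex_intro _ _ (conj face_t erefl))).
by exists (chain y m.+1); split=> //; left.
Qed.

End StrandChains.

Section Cells.
Variable G : two_graph.

Lemma edge_cover (h : H G) : exists e : edge G, h \in proj1_sig e.
Proof.
have [fix_h | move_h] := eqVneq (Defs.iota h) h.
- have ext : is_int_edge [set h] \/ is_ext_edge [set h] by right; exists h.
  by exists (exist (fun e => is_int_edge e \/ is_ext_edge e) _ ext); rewrite /= set11.
- have int : is_int_edge [set h; Defs.iota h] \/ is_ext_edge [set h; Defs.iota h].
    by left; exists h; split=> //; apply/eqP.
  by exists (exist (fun e => is_int_edge e \/ is_ext_edge e) _ int); rewrite /= set21.
Qed.

Lemma edge_nonempty (e : edge G) : exists h, h \in proj1_sig e.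
Proof. by case: e => e /= [] [h [_ ->]]; exists h; rewrite ?set21 ?set11. Qed.

Lemma face_nonempty (f : face G) : exists s, occurs s f.
Proof.
case: f => P fP; rewrite /occurs /=; case: fP => -[|x t] [ft ->].
  by case: ft => -[[]].
by exists x, (x :: t); rewrite mem_head; split=> //; left.
Qed.

Lemma vertex_lt_face s (f : face G) : occurs s f -> cell_lt (CV (nu (mu s))) (CF f).
Proof.
have [e he] := edge_cover (mu s).
by exists e; split; [exists (mu s) | exists (mu s), s].
Qed.

Lemma cell_lt_strict (c c' : cell G) : cell_lt c c' -> strict (@cell_le G) c c'.
Proof. by move=> lt; split; [right | case: c c' lt => ? [] // ? _ ->]. Qed.

Lemma cell_le_complex : reidemeister_complex (@cell_dim G) (@cell_le G).
Proof.
split.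
- by left.
- by move=> c c' [//|lt] [//|lt']; case: c c' lt lt' => ? [].
- move=> c1 c2 c3 [-> //|lt12] [<-|lt23]; first by right.
  by right; case: c1 c2 c3 lt12 lt23 => [?|?|?] [|e|] // [] // ? ve ef; exists e.
- move=> c c'' [[->|lt] neq] dim2 //.
  case: c'' c lt neq dim2 => ? [] //= ? [e [lt1 lt2]] _ _.
  by exists (CE e); split; exact: cell_lt_strict.
Qed.

Lemma cell_le_pure c : cell_dim c <> 0 ->
  exists c0, cell_dim c0 = 0 /\ strict (@cell_le G) c0 c.
Proof.
case: c => [//|e|f] _.
- have [h he] := edge_nonempty e.
  by exists (CV (nu h)); split=> //; apply: cell_lt_strict; exists h.
- have [s sf] := face_nonempty f.
  by exists (CV (nu (mu s))); split=> //; apply/cell_lt_strict/vertex_lt_face.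
Qed.

Lemma cell_le_face :
  (forall v : V G, exists h, nu h = v) -> (forall h : H G, exists s, mu s = h) ->
  forall c : cell G, exists f, cell_le c (CF f).
Proof.
move=> nu_onto mu_onto [v|e|f].
- have [h <-] := nu_onto v; have [s <-] := mu_onto h; have [f sf] := face_cover s.
  by exists f; right; exact: vertex_lt_face.
- have [h he] := edge_nonempty e; have [s sh] := mu_onto h.
  have [f sf] := face_cover s.
  by exists f; right; exists h, s.
- by exists f; left.
Qed.

End Cells.

Theorem mainTheorem2 (G : two_graph) :
  pure_complex (@cell_dim G) (@cell_le G) /\
  ((forall v : V G, exists h : H G, nu h = v) ->
   (forall h : H G, exists s : S G, mu s = h) ->
   n_dimensional_complex (@cell_dim G) (@cell_le G) 2).
Proof.
split; first by split; [exact: cell_le_complex | exact: cell_le_pure].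
move=> nu_onto mu_onto; split; [exact: cell_le_complex | by case |].
by move=> c; have [f cf] := cell_le_face nu_onto mu_onto c; exists (CF f).
Qed.
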